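(* Let $A$ be a prime ring which satisfies the ascending chain condition on prime ideals (every ascending chain of prime ideals of $A$ stabilizes). Then $A$ is Hopfian.
   Context: A ring $A$ is \emph{Hopfian} if $A$ is not isomorphic (as a ring) to $A/J$ for any nonzero two-sided ideal $J \triangleleft A$. *)

From HB Require Import structures.
From mathcomp Require Import all_boot all_order all_algebra.
From Stdlib Require Import ClassicalEpsilon.
Set Implicit Arguments. Unset Strict Implicit. Unset Printing Implicit Defensive.
Import GRing.Theory.
Local Open Scope ring_scope.

Definition ideal2 (A : nzRingType) (J : A -> Prop) : Prop :=
  [/\ J 0,
      (forall x y, J x -> J y -> J (x - y)),
      (forall a x, J x -> J (a * x)) &
      (forall a x, J x -> J (x * a))].

Definition prime_ideal (A : nzRingType) (P : A -> Prop) : Prop :=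
  [/\ ideal2 P, ~ P 1 &
      forall a b, (forall r, P (a * r * b)) -> P a \/ P b].

Definition prime_ring (A : nzRingType) : Prop :=
  prime_ideal (fun x : A => x = 0).

Definition acc_prime (A : nzRingType) : Prop :=
  forall P : nat -> A -> Prop,
    (forall n, prime_ideal (P n)) ->
    (forall n x, P n x -> P n.+1 x) ->
    exists N, forall n, (N <= n)%N -> forall x, P n x <-> P N x.

Definition coset (A : nzRingType) (J : A -> Prop) (a : A) : A -> Prop :=
  fun x => J (x - a).

Definition quot (A : nzRingType) (J : A -> Prop) : Type :=
  {C : A -> Prop | exists a, C = coset J a}.

Definition qclass (A : nzRingType) (J : A -> Prop) (a : A) : quot J :=
  exist _ (coset J a) (ex_intro _ a erefl).

Definition qrepr (A : nzRingType) (J : A -> Prop) (C : quot J) : A :=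
  proj1_sig (constructive_indefinite_description _ (proj2_sig C)).

Definition qone (A : nzRingType) (J : A -> Prop) : quot J := qclass J 1.
Definition qadd (A : nzRingType) (J : A -> Prop) (C D : quot J) : quot J :=
  qclass J (qrepr C + qrepr D).
Definition qmul (A : nzRingType) (J : A -> Prop) (C D : quot J) : quot J :=
  qclass J (qrepr C * qrepr D).

Definition ring_iso_quot (A : nzRingType) (J : A -> Prop) (f : A -> quot J) :
  Prop :=
  [/\ bijective f, f 1 = qone J,
      (forall x y, f (x + y) = qadd (f x) (f y)) &
      (forall x y, f (x * y) = qmul (f x) (f y))].

Definition hopfian (A : nzRingType) : Prop :=
  forall J : A -> Prop, ideal2 J -> (exists x, J x /\ x <> 0) ->
    ~ exists f : A -> quot J, ring_iso_quot f.

From HB Require Import structures.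
From mathcomp Require Import all_boot all_order all_algebra.
From Stdlib Require Import ClassicalEpsilon FunctionalExtensionality PropExtensionality ProofIrrelevance.
Set Implicit Arguments. Unset Strict Implicit. Unset Printing Implicit Defensive.
Import GRing.Theory.
Local Open Scope ring_scope.

(* An isomorphism A ~ A/J composed with the projection A -> A/J is a surjective
   ring endomorphism phi of A with kernel J.  The kernels of the iterates phi^n
   form an ascending chain of prime ideals (pull-backs of the zero ideal along
   surjections onto the prime ring A), so ker phi^N = ker phi^(N+1) for some N.
   Lifting a nonzero x in J to some y with phi^N y = x gives phi^(N+1) y = 0,
   hence x = phi^N y = 0, a contradiction. *)

Section Quotient.
Variables (A : nzRingType) (J : A -> Prop).
Hypothesis idealJ : ideal2 J.

Lemma qclass_eq a b : qclass J a = qclass J b <-> J (a - b).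
Proof.
case: idealJ => J0 JB _ _; split.
- move=> /(f_equal (@proj1_sig _ _)) /= Eab.
  have : coset J a a by rewrite /coset subrr.
  by rewrite Eab.
- move=> Jab; apply: eq_sig_hprop => [C p q|]; first exact: proof_irrelevance.
  apply: functional_extensionality => x; apply: propositional_extensionality.
  rewrite /coset; split => Jx.
  + by have := JB _ _ Jx (JB _ _ J0 Jab); rewrite sub0r opprK addrA addrNK.
  + by have := JB _ _ Jx Jab; rewrite opprB addrA addrNK.
Qed.

Lemma qclass_repr C : qclass J (qrepr C) = C.
Proof.
apply: eq_sig_hprop => [D p q|]; first exact: proof_irrelevance.
by rewrite /qrepr /=; case: (constructive_indefinite_description _ _) => r /= ->.
Qed.

Lemma qrepr_classB a : J (qrepr (qclass J a) - a).
Proof. by apply/qclass_eq; rewrite qclass_repr. Qed.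

Lemma qadd_class a b : qadd (qclass J a) (qclass J b) = qclass J (a + b).
Proof.
case: idealJ => J0 JB _ _; apply/qclass_eq.
have := JB _ _ (qrepr_classB a) (JB _ _ J0 (qrepr_classB b)).
by rewrite sub0r opprK opprD addrACA addrC.
Qed.

Lemma qmul_class a b : qmul (qclass J a) (qclass J b) = qclass J (a * b).
Proof.
case: idealJ => J0 JB JMl JMr; apply/qclass_eq.
set a' := qrepr _; set b' := qrepr _.
have -> : a' * b' - a * b = a' * (b' - b) - (- ((a' - a) * b)).
  by rewrite opprK mulrBr mulrBl addrA addrNK.
apply: (JB); first exact: JMl (qrepr_classB b).
by have := JB _ _ J0 (JMr b _ (qrepr_classB a)); rewrite sub0r.
Qed.

Variables (f : A -> quot J) (g : quot J -> A).
Hypotheses (fK : cancel f g) (gK : cancel g f).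
Hypotheses (f1 : f 1 = qone J) (fD : forall x y, f (x + y) = qadd (f x) (f y))
           (fM : forall x y, f (x * y) = qmul (f x) (f y)).

Definition quot_endo (a : A) : A := g (qclass J a).

Lemma quot_endoD a b : quot_endo (a + b) = quot_endo a + quot_endo b.
Proof. by apply: (can_inj fK); rewrite /quot_endo gK fD !gK qadd_class. Qed.

Lemma quot_endoB : {morph quot_endo : a b / a - b}.
Proof.
by move=> a b; rewrite -[in RHS](subrK b a) [in RHS]quot_endoD addrK.
Qed.

Lemma quot_endo_is_monoid_morphism : monoid_morphism quot_endo.
Proof.
split=> [|a b]; first by rewrite /quot_endo -[qclass J 1]/(qone J) -f1 fK.
by apply: (can_inj fK); rewrite /quot_endo gK fM !gK qmul_class.
Qed.

HB.instance Definition _ :=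
  GRing.isZmodMorphism.Build A A quot_endo quot_endoB.
HB.instance Definition _ :=
  GRing.isMonoidMorphism.Build A A quot_endo quot_endo_is_monoid_morphism.

Lemma ring_iso_quot_surj_endo :
  exists phi : {rmorphism A -> A},
    (forall y, exists x, phi x = y) /\ (forall a, J a -> phi a = 0).
Proof.
exists (GRing.RMorphism.clone _ _ quot_endo _); split=> [y|a Ja] /=.
- by exists (qrepr (f y)); rewrite /quot_endo qclass_repr fK.
- rewrite -(rmorph0 quot_endo) /quot_endo.
  by congr g; apply/qclass_eq; rewrite subr0.
Qed.

End Quotient.

Section Iterate.
Variables (A : nzRingType) (phi : {rmorphism A -> A}).

Lemma iter_rmorphB n : {morph iter n phi : a b / a - b}.
Proof. by elim: n => // n IHn a b /=; rewrite IHn rmorphB. Qed.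

Lemma iter_rmorph_is_monoid_morphism n : monoid_morphism (iter n phi).
Proof.
elim: n => // n [IH1 IHM]; split=> [|a b] /=; first by rewrite IH1 rmorph1.
by rewrite IHM rmorphM.
Qed.

HB.instance Definition _ n := GRing.isZmodMorphism.Build A A (iter n phi)
  (iter_rmorphB n).
HB.instance Definition _ n := GRing.isMonoidMorphism.Build A A (iter n phi)
  (iter_rmorph_is_monoid_morphism n).

End Iterate.

Lemma iter_surj (T : Type) (h : T -> T) :
  (forall y, exists x, h x = y) -> forall n y, exists x, iter n h x = y.
Proof.
move=> hS; elim=> [|n IHn] y; first by exists y.
have [z <-] := IHn y; have [x <-] := hS z.
by exists x; rewrite iterSr.
Qed.

Lemma rmorph_kernel_prime (A B : nzRingType) (phi : {rmorphism A -> B}) :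
  (forall y, exists x, phi x = y) -> prime_ring B ->
  prime_ideal (fun a => phi a = 0).
Proof.
move=> phiS [_ _ primeB]; split.
- split=> [|a b phia phib|a b phib|a b phia]; rewrite ?rmorph0 //.
  + by rewrite rmorphB phia phib subr0.
  + by rewrite rmorphM phib mulr0.
  + by rewrite rmorphM phia mul0r.
- by rewrite rmorph1; apply/eqP; exact: oner_neq0.
- move=> a b phiab; apply: primeB => s.
  by have [r <-] := phiS s; rewrite -!rmorphM phiab.
Qed.

Lemma surj_rmorph_kernel0 (A : nzRingType) (phi : {rmorphism A -> A}) :
  prime_ring A -> acc_prime A -> (forall y, exists x, phi x = y) ->
  forall a, phi a = 0 -> a = 0.
Proof.
move=> primeA accA phiS a phia.
pose K n a := iter n phi a = 0.
have K_prime n : prime_ideal (K n).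
  exact: rmorph_kernel_prime (iter_surj phiS n) primeA.
have K_incr n x : K n x -> K n.+1 x by rewrite /K iterS => ->; rewrite rmorph0.
have [N KN] := accA K K_prime K_incr.
case: (iter_surj phiS N a) phia => y <- phia.
by apply/(KN N.+1 (leqnSn N)); rewrite /K iterS.
Qed.

Theorem mainTheorem2 (A : nzRingType) :
  prime_ring A -> acc_prime A -> hopfian A.
Proof.
move=> primeA accA J idealJ [x [Jx x_neq0]] [f [[g fK gK] f1 fD fM]].
have [phi [phiS J_ker]] := ring_iso_quot_surj_endo idealJ fK gK f1 fD fM.
by apply: x_neq0; apply: (surj_rmorph_kernel0 primeA accA phiS); apply: J_ker.
Qed.
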